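(* Let $T\ge2$ and let the standing assumptions hold (each $f_t$ convex). Then USC satisfies \[ \sum_{t=1}^T f_t(\mathbf{x}_t)-\min_{\mathbf{x}\in\mathcal{X}}\sum_{t=1}^T f_t(\mathbf{x})\le \min_{A\in\mathcal{A}_{con}}R(A)+4\Gamma GD+\frac{\Gamma D}{\sqrt{\ln|\mathcal{E}|}}\sqrt{4G^2+\sum_{t=1}^T\|\nabla f_t(\mathbf{x}_t)\|^2}. \] In particular, when $|\mathcal{A}_{str}|,|\mathcal{A}_{exp}|,|\mathcal{A}_{con}|$ are bounded by constants, the additive term is $O(\sqrt{T\log\log T})$.
   Context: Setting (online convex optimization): $\mathcal{X}\subset\mathbb{R}^d$ is a nonempty closed convex set with $\max_{\mathbf{x},\mathbf{y}\in\mathcal{X}}\|\mathbf{x}-\mathbf{y}\|\le D$. For $t=1,\dots,T$, $f_t:\mathcal{X}\to\mathbb{R}$ are convex differentiable functions with $\max_{\mathbf{x}\in\mathcal{X}}\|\nabla f_t(\mathbf{x})\|\le G$. At round $t$ a learner outputs $\mathbf{x}_t\in\mathcal{X}$ depending only on $f_1,\dots,f_{t-1}$, then $f_t$ is revealed. An online algorithm (expert) is any such procedure. Algorithm USC: Let $N=\lceil\log_2T\rceil$ and $\mathcal{P}_{str}=\mathcal{P}_{exp}=\{2^k/T: k=0,1,\dots,N\}$. Let $\mathcal{A}_{str},\mathcal{A}_{exp}$ be finite sets of online algorithms each taking a positive parameter, and $\mathcal{A}_{con}$ a finite set of online algorithms. The expert set $\mathcal{E}$ consists of the experts $E(A,\lambda')$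 ($A$ run with parameter $\lambda'$) for $A\in\mathcal{A}_{str},\lambda'\in\mathcal{P}_{str}$; $E(A,\alpha')$ for $A\in\mathcal{A}_{exp},\alpha'\in\mathcal{P}_{exp}$; and $E(A)$ for $A\in\mathcal{A}_{con}$. Index them $E^1,\dots,E^{|\mathcal{E}|}$; every expert receives the full functions $f_1,f_2,\dots$ and outputs $\mathbf{x}_t^i\in\mathcal{X}$ at round $t$. Fix any $\bar{\mathbf{x}}\in\mathcal{X}$. USC outputs $\mathbf{x}_t=\sum_i p_t^i\mathbf{x}_t^i$ with weights given by Adapt-ML-Prod on the losses $\ell_t^i=\frac{\langle\nabla f_t(\mathbf{x}_t),\mathbf{x}_t^i-\bar{\mathbf{x}}\rangle+GD}{2GD}\in[0,1]$, $\ell_t=\sum_ip_t^i\ell_t^i$: namely $p_t^i=\eta_{t-1}^iw_{t-1}^i/\sum_j\eta_{t-1}^jw_{t-1}^j$, where $\eta_{t-1}^i=\min\{\frac12,\sqrt{\ln|\mathcal{E}|/(1+\sum_{s=1}^{t-1}(\ell_s-\ell_s^i)^2)}\}$ for $t\ge1$, $w_0^i=1/|\mathcal{E}|$, and $w_{t-1}^i=\big(w_{t-2}^i(1+\eta_{t-2}^i(\ell_{t-1}-\ell_{t-1}^i))\big)^{\eta_{t-1}^i/\eta_{t-2}^i}$ for $t\ge2$. Define $\Gamma=3\ln|\mathcal{E}|+\ln\big(1+\frac{|\mathcal{E}|}{2e}(1+\ln(T+1))\big)$. For $A\in\mathcal{A}_{con}$, $R(A)$ denotes a regret bound of $A$: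 a number such that whenever $f_1,\dots,f_T$ satisfy the setting, the outputs $\mathbf{y}_t$ of $A$ satisfy $\sum_t f_t(\mathbf{y}_t)-\min_{\mathbf{x}\in\mathcal{X}}\sum_tf_t(\mathbf{x})\le R(A)$. *)

From HB Require Import structures.
From mathcomp Require Import all_boot all_order all_algebra.
From mathcomp Require Import all_classical all_reals.
From mathcomp Require Import topology normedtype derive sequences exp.
Set Implicit Arguments. Unset Strict Implicit. Unset Printing Implicit Defensive.
Import Order.TTheory GRing.Theory Num.Theory.
Import numFieldNormedType.Exports.
Local Open Scope ring_scope.
Local Open Scope classical_set_scope.

Section OCO.
Variables (R : realType) (d : nat).
Local Notation V := 'rV[R]_d.

Definition dotp (u v : V) : R := \sum_(i < d) u 0 i * v 0 i.
Definition enorm (v : V) : R := Num.sqrt (\sum_(i < d) (v 0 i) ^+ 2).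

Definition grad (f : V -> R) (x : V) : V :=
  \row_(i < d) ('d f x) (delta_mx 0 i : V).

Definition convex_set (X : set V) : Prop :=
  forall x y, X x -> X y -> forall l : R, 0 <= l <= 1 ->
    X (l *: x + (1 - l) *: y).

Definition convex_on (X : set V) (f : V -> R) : Prop :=
  forall x y, X x -> X y -> forall l : R, 0 <= l <= 1 ->
    f (l *: x + (1 - l) *: y) <= l * f x + (1 - l) * f y.

Definition domain_ok (X : set V) (D : R) : Prop :=
  (exists x, X x) /\ closed X /\ convex_set X /\
  (forall x y, X x -> X y -> enorm (x - y) <= D).

Definition admissible (X : set V) (G : R) (T : nat) (fs : nat -> V -> R) : Prop :=
  forall t, (1 <= t <= T)%N ->
    convex_on X (fs t) /\
    (forall x, X x -> differentiable (fs t) x) /\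
    (forall x, X x -> enorm (grad (fs t) x) <= G).

(* an online algorithm: maps the history [f_1; ...; f_{t-1}] to x_t *)
Definition alg := seq (V -> R) -> V.
Definition online_alg (X : set V) (A : alg) : Prop := forall h, X (A h).
Definition hist (fs : nat -> V -> R) (t : nat) : seq (V -> R) :=
  [seq fs s | s <- iota 1 t.-1].

Definition regret_bound (X : set V) (G : R) (T : nat) (A : alg) (r : R) : Prop :=
  forall fs, admissible X G T fs -> forall u, X u ->
    \sum_(1 <= t < T.+1) fs t (A (hist fs t)) - \sum_(1 <= t < T.+1) fs t u <= r.

Definition Ngrid (T : nat) : nat := up_log 2 T.
Definition grid (T : nat) : seq R :=
  [seq (2 ^ k)%:R / T%:R | k <- iota 0 (Ngrid T).+1].

Definition experts (T : nat) (Astr Aexp : seq (R -> alg)) (Acon : seq alg)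
  : seq alg :=
  [seq A lam | A <- Astr, lam <- grid T] ++
  [seq A a | A <- Aexp, a <- grid T] ++ Acon.

Section USC.
Variables (T : nat) (Astr Aexp : seq (R -> alg)) (Acon : seq alg).
Variables (fs : nat -> V -> R) (G D : R) (xbar : V).

Let E := experts T Astr Aexp Acon.
Let K := size E.

Definition xexp (t : nat) (i : 'I_K) : V := nth (fun _ => 0) E i (hist fs t).

Definition eta_of (S : 'I_K -> R) (i : 'I_K) : R :=
  Num.min (1 / 2) (Num.sqrt (ln K%:R / (1 + S i))).

(* weights p given w_{t-1} and S_{t-1} = sum_{s<=t-1} (l_s - l_s^i)^2 *)
Definition usc_p (w S : 'I_K -> R) (i : 'I_K) : R :=
  eta_of S i * w i / \sum_(j < K) eta_of S j * w j.

Definition usc_loss (t : nat) (x : V) (i : 'I_K) : R :=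
  (dotp (grad (fs t) x) (xexp t i - xbar) + G * D) / (2 * G * D).

Fixpoint usc_state (n : nat) : ('I_K -> R) * ('I_K -> R) :=
  match n with
  | 0 => (fun _ => 1 / K%:R, fun _ => 0)
  | m.+1 =>
    let (w, S) := usc_state m in
    let p := usc_p w S in
    let x := \sum_(i < K) p i *: xexp m.+1 i in
    let li := usc_loss m.+1 x in
    let l := \sum_(i < K) p i * li i in
    let S' := fun i => S i + (l - li i) ^+ 2 in
    (fun i => (w i * (1 + eta_of S i * (l - li i))) `^ (eta_of S' i / eta_of S i),
     S')
  end.

Definition usc_x (t : nat) : V :=
  let (w, S) := usc_state t.-1 in
  \sum_(i < K) usc_p w S i *: xexp t i.

End USC.

Definition Gamma (K T : nat) : R :=
  3 * ln K%:R + ln (1 + K%:R / (2 * expR 1) * (1 + ln (T.+1)%:R)).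

(* the additive term, with s standing for sum_t ||grad f_t(x_t)||^2 *)
Definition add_term (K T : nat) (G D s : R) : R :=
  4 * Gamma K T * G * D
  + Gamma K T * D / Num.sqrt (ln K%:R) * Num.sqrt (4 * G ^+ 2 + s).

End OCO.

(* USC is Adapt-ML-Prod run on the linearized losses
   l_t^i = (<g_t, x_t^i - xbar> + GD) / (2GD), g_t = grad f_t(x_t).  For the expert
   j running A in A_con, convexity gives f_t(x_t) - f_t(x_t^j) <= <g_t, x_t - x_t^j>
   = 2GD r_{t,j}, with r_{t,j} = l_t - l_t^j the instantaneous regret of
   Adapt-ML-Prod; adding R(A) leaves the task of bounding sum_t r_{t,j}.

   In Adapt-ML-Prod the first-order part of the multiplicative update cancels in
   the total weight because p_t is proportional to eta_i w_i, and lowering the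
   learning rates costs only (eta_t / eta_{t+1} - 1) / e per expert, which
   telescopes to O(log T); so every weight stays below 1 + O(|E| log T).  On the
   other hand ln (1 + x) >= x - x^2 makes ln w_{T,j} / eta_T grow by at least
   r - eta r^2 per round.  With eta ~ sqrt (ln |E| / (1 + S)), S the sum of the
   squared r's, this gives sum_t r_{t,j} <= Gamma / sqrt (ln |E|) * sqrt (1 + S_T)
   + 2 Gamma, and |r_{t,j}| <= ||g_t|| / (2G) turns S_T into the gradient sum.
   As |E| = Theta(log T), Gamma = O(log log T), which gives the last claim. *)

From HB Require Import structures.
From mathcomp Require Import all_boot all_order all_algebra.
From mathcomp Require Import all_classical all_reals.
From mathcomp Require Import topology normedtype derive sequences exp.
From mathcomp Require Import ring lra.
Set Implicit Arguments. Unset Strict Implicit. Unset Printing Implicit Defensive.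
Import Order.TTheory GRing.Theory Num.Theory.
Import numFieldNormedType.Exports.
Local Open Scope ring_scope.
Local Open Scope classical_set_scope.

Section RealInequalities.
Variable R : realType.
Implicit Types (x y u b : R).

Lemma ln_le_subr1 u : 0 < u -> ln u <= u - 1.
Proof. by move=> u0; have := @le_ln1Dx R (u - 1); rewrite addrCA subrr addr0; apply; lra. Qed.

Lemma ln_ge_subrV u : 0 < u -> 1 - u^-1 <= ln u.
Proof.
move=> u0; have := @ln_le_subr1 u^-1; rewrite invr_gt0 lnV ?posrE //; move/(_ u0).
lra.
Qed.

Lemma ln2_bounds : 1 / 2 <= ln (2 : R) <= 1.
Proof. by have := @ln_ge_subrV 2; have := @ln_le_subr1 2; lra. Qed.

Let h : R -> R := (@ln R - (id - cst 1)) + (id - cst 1) ^+ 2.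

Let hE u : h u = ln u - (u - 1) + (u - 1) ^+ 2. Proof. by []. Qed.

Let is_derive_h u : 0 < u -> is_derive u 1 h (u^-1 - 1 + 2 * (u - 1)).
Proof.
move=> u0.
have dln : is_derive u (1:R) (@ln R) u^-1 by exact: is_derive1_ln.
have dB1 : is_derive u (1:R) (@id R - cst 1) 1.
  by rewrite -[X in is_derive _ _ _ X]subr0; apply: is_deriveB.
have := is_deriveD (is_deriveB dln dB1) (is_deriveX 2 dB1).
by move=> dh; apply: is_derive_eq dh _; rewrite [_%:A]mulr1 expr1.
Qed.

(* [h] decreases on [1/2, 1] and increases on [1, 3/2], where its derivative
   (u - 1) (2 u - 1) / u changes sign; hence [h >= h 1 = 0] there. *)
Let h_ge0 u : 1 / 2 <= u <= 3 / 2 -> 0 <= h u.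
Proof.
move=> /andP[ul uu].
have h1 : h 1 = 0 by rewrite hE ln1 subrr expr0n /= subrr addr0.
have dh y : 0 < y -> derivable h y 1 by move=> /is_derive_h [].
have h' y : 0 < y -> h^`() y = y^-1 - 1 + 2 * (y - 1).
  by move=> /is_derive_h dy; rewrite derive1E derive_val.
have ch a b : 0 < a -> {within `[a, b], continuous h}.
  move=> a0; apply: derivable_within_continuous => y.
  by rewrite in_itv /= => /andP[ay _]; apply: dh; lra.
have sign y : 0 < y -> y^-1 - 1 + 2 * (y - 1) = (y - 1) * (2 * y - 1) / y.
  by move=> y0; field; rewrite gt_eqF.
rewrite -h1; case: (lerP u 1) => u1.
- apply: (@ler0_derive1_le_cc _ h (1/2) 1).
  + by move=> y; rewrite in_itv /= => /andP[ay _]; apply: dh; lra.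
  + move=> y; rewrite in_itv /= => /andP[ay yb]; have y0 : 0 < y by lra.
    rewrite h' // sign // pmulr_lle0 ?invr_gt0 //; nra.
  + by apply: ch; lra.
  + by rewrite in_itv /=; lra.
  + by rewrite in_itv /=; lra.
  + exact: u1.
- apply: (@ger0_derive1_le_cc _ h 1 (3/2)).
  + by move=> y; rewrite in_itv /= => /andP[ay _]; apply: dh; lra.
  + move=> y; rewrite in_itv /= => /andP[ay yb]; have y0 : 0 < y by lra.
    rewrite h' // sign // pmulr_lge0 ?invr_gt0 //; nra.
  + by apply: ch; lra.
  + by rewrite in_itv /=; lra.
  + by rewrite in_itv /=; lra.
  + exact: ltW.
Qed.

Lemma ln1Dx_ge x : -1 / 2 <= x <= 1 / 2 -> x - x ^+ 2 <= ln (1 + x).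
Proof.
move=> xb; have : 0 <= h (1 + x) by apply: h_ge0; lra.
by rewrite hE [1 + x]addrC addrK; lra.
Qed.

Lemma expR_tangent x y : expR y * (1 + x - y) <= expR x.
Proof.
have -> : expR x = expR y * expR (x - y) by rewrite -expRD addrC subrK.
by rewrite ler_pM2l ?expR_gt0 // -addrA expR_ge1Dx.
Qed.

(* With [e^a = y / b], [y^b = exp (b a + (1 - b) c)] for every [c]; the tangents
   of [exp] at that point split it into [y + (1 - b) e^c], and [ln b <= b - 1]
   bounds [e^c] for the chosen [c]. *)
Lemma powR_le_addr y b : 0 < y -> 0 < b <= 1 -> y `^ b <= y + (b^-1 - 1) / expR 1.
Proof.
move=> y0 /andP[b0 b1]; have [->|bne1] := eqVneq b 1.
  by rewrite powRr1 ?(ltW y0) // invr1 subrr mul0r addr0.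
have b1' : 0 < 1 - b by rewrite subr_gt0 lt_neqAle bne1.
set m := b * ln y; set a := ln y - ln b; set c := b * ln b / (1 - b).
have ea : b * expR a = y by rewrite expRB !lnK ?posrE // mulrC divfK ?gt_eqF.
have ec : expR c <= b^-1 / expR 1.
  have : c <= - 1 - ln b by rewrite ler_pdivrMr //; have := ln_le_subr1 b0; lra.
  by rewrite -ler_expR expRB expRN lnK ?posrE // mulrC.
have convexity : expR m <= b * expR a + (1 - b) * expR c.
  apply: le_trans (lerD (ler_wpM2l (ltW b0) (expR_tangent a m))
                        (ler_wpM2l (ltW b1') (expR_tangent c m))).
  have -> : b * (expR m * (1 + a - m)) + (1 - b) * (expR m * (1 + c - m)) = expR m.
    by rewrite /m /a /c; field; exact: lt0r_neq0.
  exact: lexx.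
rewrite /powR gt_eqF // -/m; apply: le_trans convexity _; rewrite ea lerD2l.
have -> : (b^-1 - 1) / expR 1 = (1 - b) * (b^-1 / expR 1).
  by field; rewrite !gt_eqF ?expR_gt0.
by rewrite ler_wpM2l // ltW.
Qed.

End RealInequalities.

Section SlowlyIncreasingSequences.
Variables (R : realType) (a : nat -> R) (n : nat).
Hypothesis a0_ge1 : 1 <= a 0.
Hypothesis a_incr : forall t, (t < n)%N -> a t <= a t.+1 <= a t + 1.

Lemma seq_ge1 t : (t <= n)%N -> 1 <= a t.
Proof.
elim: t => [//|t IH] tn.
by have := a_incr tn; have := IH (ltnW tn); lra.
Qed.

Lemma seq_le_add_nat : a n <= a 0 + n%:R.
Proof.
suff : forall m, (m <= n)%N -> a m <= a 0 + m%:R by apply.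
elim=> [|m IH] mn; first by rewrite addr0.
by have := a_incr mn; have := IH (ltnW mn); rewrite -addn1 natrD; lra.
Qed.

Let sqrt_ratio_sub1_le (x y : R) : 1 <= x -> x <= y <= x + 1 ->
  Num.sqrt (y / x) - 1 <= (ln y - ln x) / 2 + (x^-1 - y^-1) / 2.
Proof.
move=> x1 /andP[xy yx]; have x0 : 0 < x by lra.
set s := Num.sqrt (y / x).
have yx1 : 1 <= y / x by rewrite ler_pdivlMr // mul1r.
have s2 : s ^+ 2 = y / x by rewrite sqr_sqrtr // (le_trans _ yx1).
have s1 : 1 <= s by rewrite -sqrtr1 ler_sqrt // (le_trans _ yx1).
have lns : ln s = (ln y - ln x) / 2.
  have : ln (s ^+ 2) = ln s *+ 2 by rewrite lnXn //; lra.
  by rewrite s2 ln_div ?posrE ?(lt_le_trans x0) // mulr2n => ->; field.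
(* [s - 1 - ln s <= (s - 1)^2 <= ((s^2 - 1) / 2)^2], and the last term is
   bounded by the telescoping increment [(1/x - 1/y) / 2] *)
have quad : s - 1 - ln s <= (s - 1) ^+ 2.
  have : 1 - s^-1 <= ln s by apply: ln_ge_subrV; lra.
  have -> : 1 - s^-1 = s - 1 - (s - 1) ^+ 2 / s by field; rewrite gt_eqF //; lra.
  have : (s - 1) ^+ 2 / s <= (s - 1) ^+ 2.
    by rewrite ler_pdivrMr ?ler_peMr ?sqr_ge0 //; lra.
  lra.
have half : (s - 1) ^+ 2 <= ((s ^+ 2 - 1) / 2) ^+ 2.
  have -> : (s ^+ 2 - 1) / 2 = (s - 1) * ((s + 1) / 2) by field.
  rewrite exprMn ler_peMr ?sqr_ge0 // -[1](expr1n _ 2) lerXn2r ?nnegrE //; lra.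
have incr : ((y - x) / x / 2) ^+ 2 <= (x^-1 - y^-1) / 2.
  rewrite -subr_ge0.
  have -> : (x^-1 - y^-1) / 2 - ((y - x) / x / 2) ^+ 2
          = ((y - x) * (2 * x - (y - x) * y)) / (4 * x ^+ 2 * y).
    by field; rewrite !gt_eqF //; lra.
  apply: divr_ge0; last by apply: mulr_ge0; [apply: mulr_ge0|]; nra.
  by apply: mulr_ge0; nra.
have s2_sub1 : s ^+ 2 - 1 = (y - x) / x by rewrite s2; field; rewrite gt_eqF.
by rewrite s2_sub1 in half; rewrite -lns; lra.
Qed.

Lemma sum_sqrt_ratio_sub1_le : a 0 = 1 ->
  \sum_(0 <= t < n) (Num.sqrt (a t.+1 / a t) - 1) <= (1 + ln (a n)) / 2.
Proof.
move=> a01.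
apply: le_trans (ler_sum_nat (G := fun t => (ln (a t.+1) - ln (a t)) / 2
    + ((a t)^-1 - (a t.+1)^-1) / 2) _) _.
  move=> t /andP[_ tn]; apply: sqrt_ratio_sub1_le; [exact: seq_ge1 (ltnW tn)|].
  exact: a_incr.
have tV : \sum_(0 <= t < n) ((a t)^-1 - (a t.+1)^-1) = (a 0)^-1 - (a n)^-1.
  rewrite -[RHS]opprB -(telescope_sumr (fun t => (a t)^-1)) // -sumrN.
  by apply: eq_bigr => t _; rewrite opprB.
rewrite big_split /= -!mulr_suml telescope_sumr // tV a01 ln1 invr1.
have : 0 <= (a n)^-1 by rewrite invr_ge0; have := seq_ge1 (leqnn n); lra.
lra.
Qed.

Let diff_div_sqrt_le (x y : R) : 1 <= x -> x <= y <= x + 1 ->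
  (y - x) / Num.sqrt x <= 3 * (Num.sqrt y - Num.sqrt x).
Proof.
move=> x1 /andP[xy yx].
have p1 : 1 <= Num.sqrt x by rewrite -sqrtr1 ler_sqrt //; lra.
have pq : Num.sqrt x <= Num.sqrt y by rewrite ler_sqrt //; lra.
have px : Num.sqrt x ^+ 2 = x by rewrite sqr_sqrtr //; lra.
have qy : Num.sqrt y ^+ 2 = y by rewrite sqr_sqrtr //; lra.
have q0 := sqrtr_ge0 y.
rewrite ler_pdivrMr; last lra.
rewrite -[in X in X - _]qy -[in X in _ - X]px; nra.
Qed.

Lemma sum_diff_div_sqrt_le :
  \sum_(0 <= t < n) (a t.+1 - a t) / Num.sqrt (a t) <= 3 * Num.sqrt (a n).
Proof.
apply: le_trans (ler_sum_nat (G := fun t =>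
    3 * (Num.sqrt (a t.+1) - Num.sqrt (a t))) _) _.
  move=> t /andP[_ tn]; apply: diff_div_sqrt_le; [exact: seq_ge1 (ltnW tn)|].
  exact: a_incr.
rewrite -mulr_sumr telescope_sumr //; have := sqrtr_ge0 (a 0); lra.
Qed.

End SlowlyIncreasingSequences.

Section LearningRate.
Variable R : realType.
Implicit Types (L u v : R).

Definition lrate L u : R := Num.min (1 / 2) (Num.sqrt (L / u)).

Lemma lrate_gt0 L u : 0 < L -> 0 < u -> 0 < lrate L u.
Proof.
by move=> L0 u0; rewrite lt_min sqrtr_gt0 divr_gt0 // divr_gt0.
Qed.

Lemma lrate_le12 L u : lrate L u <= 1 / 2.
Proof. by rewrite ge_min lexx. Qed.

Lemma lrate_le_sqrt L u : 0 <= L -> 0 < u -> lrate L u <= Num.sqrt L / Num.sqrt u.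
Proof. by move=> L0 u0; rewrite ge_min sqrtrM // sqrtrV ?(ltW u0) // lexx orbT. Qed.

Lemma lrate_antiR L u v : 0 <= L -> 0 < u -> u <= v -> lrate L v <= lrate L u.
Proof.
move=> L0 u0 uv; rewrite le_min !ge_min lexx /=; apply/orP; right.
by rewrite ler_sqrt ?divr_ge0 ?ler_wpM2l ?lef_pV2 ?posrE //; lra.
Qed.

Lemma lrate_ratio_le L u v : 0 < L -> 0 < u -> u <= v ->
  lrate L u / lrate L v <= Num.sqrt (v / u).
Proof.
move=> L0 u0 uv; have v0 : 0 < v by lra.
have q1 : 1 <= Num.sqrt (v / u).
  by rewrite -sqrtr1 ler_sqrt ?divr_ge0 ?ler_pdivlMr ?mul1r //; lra.
rewrite ler_pdivrMr ?lrate_gt0 // {2}/lrate minEle; case: ifP => _.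
  by apply: le_trans (lrate_le12 L u) _; rewrite ler_peMl //; lra.
have -> : Num.sqrt (v / u) * Num.sqrt (L / v) = Num.sqrt (L / u).
  rewrite -sqrtrM ?divr_ge0 ?(ltW v0) ?(ltW u0) //; congr Num.sqrt.
  by field; rewrite !gt_eqF.
by rewrite ge_min lexx orbT.
Qed.

Lemma lrateV_le L u : 0 < L -> 0 < u -> (lrate L u)^-1 <= 2 + Num.sqrt u / Num.sqrt L.
Proof.
move=> L0 u0; have : 0 <= Num.sqrt u / Num.sqrt L by rewrite divr_ge0 ?sqrtr_ge0.
rewrite /lrate minEle; case: ifP => _.
  by rewrite invf_div divr1; lra.
by rewrite sqrtrM ?(ltW L0) // sqrtrV ?(ltW u0) // invf_div; lra.
Qed.

End LearningRate.

Section AdaptMLProd.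
Variables (R : realType) (K T : nat) (L : nat -> ('I_K -> R) -> 'I_K -> R).
Implicit Types (w S : 'I_K -> R) (i : 'I_K).

Definition amp_lr S i : R := lrate (ln K%:R) (1 + S i).

Definition amp_prob w S i : R := amp_lr S i * w i / \sum_(j < K) amp_lr S j * w j.

(* The state after [n] rounds: the weights [w_n] and the cumulative squared
   instantaneous regrets [S_n]; [L t p] is the loss vector of round [t] when
   the learner plays the mixture [p]. *)
Fixpoint amp_state (n : nat) : ('I_K -> R) * ('I_K -> R) :=
  match n with
  | 0 => (fun _ => 1 / K%:R, fun _ => 0)
  | m.+1 =>
    let (w, S) := amp_state m in
    let p := amp_prob w S in
    let li := L m.+1 p in
    let l := \sum_(i < K) p i * li i in
    let S' := fun i => S i + (l - li i) ^+ 2 in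
    (fun i => (w i * (1 + amp_lr S i * (l - li i))) `^ (amp_lr S' i / amp_lr S i), S')
  end.

Definition amp_w n := (amp_state n).1.
Definition amp_S n := (amp_state n).2.
Definition amp_p t := amp_prob (amp_w t.-1) (amp_S t.-1).
Definition amp_mix t : R := \sum_(i < K) amp_p t i * L t (amp_p t) i.
Definition amp_r t i : R := amp_mix t - L t (amp_p t) i.

Lemma amp_SS n i : amp_S n.+1 i = amp_S n i + amp_r n.+1 i ^+ 2.
Proof. by rewrite /amp_r /amp_mix /amp_p /amp_S /amp_w /=; case: (amp_state n). Qed.

Lemma amp_wS n i : amp_w n.+1 i = (amp_w n i * (1 + amp_lr (amp_S n) i * amp_r n.+1 i))
  `^ (amp_lr (amp_S n.+1) i / amp_lr (amp_S n) i).
Proof. by rewrite /amp_r /amp_mix /amp_p /amp_S /amp_w /=; case: (amp_state n). Qed.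

Lemma amp_SE n i : amp_S n i = \sum_(0 <= t < n) amp_r t.+1 i ^+ 2.
Proof.
by elim: n => [|n IH]; [rewrite big_geq | rewrite amp_SS big_nat_recr //= IH].
Qed.

Lemma amp_S_ge0 n i : 0 <= amp_S n i.
Proof. by rewrite amp_SE; apply: sumr_ge0 => t _; exact: sqr_ge0. Qed.

Hypothesis K_gt1 : (1 < K)%N.
Hypothesis losses01 : forall t p, (0 < t <= T)%N -> (forall i, 0 <= p i) ->
  \sum_(i < K) p i = 1 -> forall i, 0 <= L t p i <= 1.

Let lnK_gt0 : 0 < ln (K%:R : R).
Proof. by apply: ln_gt0; rewrite ltr1n. Qed.

Lemma amp_lr_gt0 n i : 0 < amp_lr (amp_S n) i.
Proof. by apply: lrate_gt0 => //; have := amp_S_ge0 n i; lra. Qed.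

Lemma amp_lr_anti n i : amp_lr (amp_S n.+1) i <= amp_lr (amp_S n) i.
Proof.
apply: lrate_antiR; rewrite ?(ltW lnK_gt0) ?amp_SS ?lerD2l ?lerDl ?sqr_ge0 //.
by have := amp_S_ge0 n i; lra.
Qed.

Section Round.
Variables (w S : 'I_K -> R).
Hypotheses (w_gt0 : forall i, 0 < w i) (lr_gt0 : forall i, 0 < amp_lr S i).

Let Z_gt0 : 0 < \sum_(j < K) amp_lr S j * w j.
Proof.
rewrite (bigD1 (Ordinal (ltnW K_gt1))) //= ltr_pwDl ?mulr_gt0 //.
by apply: sumr_ge0 => j _; rewrite mulr_ge0 // ltW.
Qed.

Lemma amp_prob_ge0 i : 0 <= amp_prob w S i.
Proof. by rewrite divr_ge0 ?mulr_ge0 ?ltW. Qed.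

Lemma amp_prob_sum1 : \sum_(i < K) amp_prob w S i = 1.
Proof. by rewrite -mulr_suml mulfV // gt_eqF. Qed.

(* The identity behind Adapt-ML-Prod: since [p_i] is proportional to
   [eta_i w_i], the first-order part of the weight update sums to zero. *)
Lemma amp_prob_balance (l : 'I_K -> R) :
  \sum_(i < K) w i * (amp_lr S i * (\sum_(j < K) amp_prob w S j * l j - l i)) = 0.
Proof.
set Z := \sum_(j < K) amp_lr S j * w j.
set C := (\sum_(j < K) amp_lr S j * w j * l j) / Z.
have -> : \sum_(j < K) amp_prob w S j * l j = C.
  by rewrite /C mulr_suml; apply: eq_bigr => j _; rewrite /amp_prob -/Z mulrAC.
under eq_bigr => i _ do rewrite mulrBr mulrBr.
rewrite sumrB.
have -> : \sum_(i < K) w i * (amp_lr S i * C) = Z * C.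
  by rewrite mulr_suml; apply: eq_bigr => i _; ring.
have -> : \sum_(i < K) w i * (amp_lr S i * l i) = \sum_(j < K) amp_lr S j * w j * l j.
  by apply: eq_bigr => i _; ring.
by rewrite /C mulrC mulfVK ?subrr // gt_eqF.
Qed.

End Round.

Lemma amp_round n : (n < T)%N -> (forall i, 0 < amp_w n i) ->
  [/\ forall i, 0 <= amp_p n.+1 i, \sum_(i < K) amp_p n.+1 i = 1
    & forall i, -1 <= amp_r n.+1 i <= 1].
Proof.
move=> nT w0; have lr0 := amp_lr_gt0 n.
have p0 := amp_prob_ge0 w0 lr0; have p1 := amp_prob_sum1 w0 lr0.
have l01 : forall i, 0 <= L n.+1 (amp_p n.+1) i <= 1 by exact: losses01.
have mix01 : 0 <= amp_mix n.+1 <= 1.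
  apply/andP; split.
    by apply: sumr_ge0 => i _; have /andP[l0 _] := l01 i; rewrite mulr_ge0 ?p0.
  rewrite -[X in _ <= X]p1; apply: ler_sum => i _.
  by have /andP[_ l1] := l01 i; rewrite ler_piMr ?p0.
by split => // i; have := l01 i; move: mix01; rewrite /amp_r; lra.
Qed.

Lemma amp_w_gt0 n : (n <= T)%N -> forall i, 0 < amp_w n i.
Proof.
elim: n => [|n IH] nT i; first by rewrite divr_gt0 // ltr0n ltnW.
have w0 := IH (ltnW nT); have [_ _ r1] := amp_round nT w0.
rewrite amp_wS powR_gt0 // mulr_gt0 //.
have := amp_lr_gt0 n i; have := lrate_le12 (ln K%:R) (1 + amp_S n i).
have := r1 i; rewrite /amp_lr; nra.
Qed.

Lemma amp_r_bound t i : (0 < t <= T)%N -> -1 <= amp_r t i <= 1.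
Proof.
by case: t => [//|n] /andP[_ nT]; have [_ _] := amp_round nT (amp_w_gt0 (ltnW nT)).
Qed.

Lemma amp_p_prob t : (0 < t <= T)%N ->
  (forall i, 0 <= amp_p t i) /\ \sum_(i < K) amp_p t i = 1.
Proof.
by case: t => [//|n] /andP[_ nT]; have [] := amp_round nT (amp_w_gt0 (ltnW nT)).
Qed.

Lemma amp_sum_w_step n : (n < T)%N ->
  \sum_(i < K) amp_w n.+1 i <= \sum_(i < K) amp_w n i +
    (expR 1)^-1 * \sum_(i < K) (amp_lr (amp_S n) i / amp_lr (amp_S n.+1) i - 1).
Proof.
move=> nT; have w0 := amp_w_gt0 (ltnW nT); have [_ _ r1] := amp_round nT w0.
have step i : amp_w n.+1 i <= amp_w n i + amp_w n i * (amp_lr (amp_S n) i * amp_r n.+1 i)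
    + (amp_lr (amp_S n) i / amp_lr (amp_S n.+1) i - 1) / expR 1.
  have lr0 := amp_lr_gt0 n i; have lr1 := amp_lr_gt0 n.+1 i.
  have pos : 0 < amp_w n i * (1 + amp_lr (amp_S n) i * amp_r n.+1 i).
    rewrite mulr_gt0 //; have := lrate_le12 (ln K%:R) (1 + amp_S n i).
    by have := r1 i; rewrite -/(amp_lr _ i); nra.
  have ratio : 0 < amp_lr (amp_S n.+1) i / amp_lr (amp_S n) i <= 1.
    by rewrite divr_gt0 //= ler_pdivrMr // mul1r amp_lr_anti.
  by rewrite amp_wS; apply: le_trans (powR_le_addr pos ratio) _; rewrite invf_div mulrDr mulr1.
apply: le_trans; first by apply: ler_sum => i _; exact: step.
rewrite big_split /= big_split /= mulr_sumr amp_prob_balance //; last exact: amp_lr_gt0.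
by rewrite addr0 lerD2l; apply: ler_sum => i _; rewrite mulrC.
Qed.

Lemma amp_sum_w_le n : (n <= T)%N -> \sum_(i < K) amp_w n i <= 1 + (expR 1)^-1 *
  \sum_(0 <= t < n) \sum_(i < K) (amp_lr (amp_S t) i / amp_lr (amp_S t.+1) i - 1).
Proof.
elim: n => [|n IH] nT.
  rewrite big_geq // mulr0 addr0 sumr_const card_ord /amp_w /= mul1r.
  by rewrite -[_ *+ K]mulr_natr mulVf // pnatr_eq0 -lt0n ltnW.
apply: le_trans (amp_sum_w_step nT) _.
by rewrite big_nat_recr //= mulrDr addrA lerD2r IH // ltnW.
Qed.

Lemma amp_S_incr t i : (t < T)%N ->
  1 + amp_S t i <= 1 + amp_S t.+1 i <= 1 + amp_S t i + 1.
Proof.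
move=> tT; rewrite amp_SS; have := amp_r_bound i (_ : (0 < t.+1 <= T)%N).
by move/(_ tT); set r := amp_r _ i => r1; rewrite !lerD2l -addrA lerDl sqr_ge0 /=; nra.
Qed.

Lemma amp_lr_ratio_sum_le i :
  \sum_(0 <= t < T) (amp_lr (amp_S t) i / amp_lr (amp_S t.+1) i - 1)
  <= (1 + ln (T.+1)%:R) / 2.
Proof.
set a := fun t => 1 + amp_S t i.
have a_incr t : (t < T)%N -> a t <= a t.+1 <= a t + 1 by exact: amp_S_incr.
have a0 : a 0 = 1 by rewrite /a /amp_S /= addr0.
apply: le_trans (ler_sum_nat (G := fun t => Num.sqrt (a t.+1 / a t) - 1) _) _.
  move=> t /andP[_ tT]; rewrite lerD2r lrate_ratio_le //.
    by have := amp_S_ge0 t i; rewrite /a; lra.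
  by case/andP: (a_incr t tT).
apply: le_trans (sum_sqrt_ratio_sub1_le _ a_incr a0) _; first by rewrite a0.
suff : ln (a T) <= ln (T.+1)%:R by lra.
rewrite ler_ln ?posrE ?ltr0n //; last first.
  by apply: lt_le_trans (seq_ge1 _ a_incr (leqnn T)); rewrite ?a0.
by apply: le_trans (seq_le_add_nat a_incr) _; rewrite a0 -natr1 addrC.
Qed.

Lemma amp_wT_le i : amp_w T i <= 1 + K%:R / (2 * expR 1) * (1 + ln (T.+1)%:R).
Proof.
apply: le_trans (_ : \sum_(j < K) amp_w T j <= _).
  rewrite (bigD1 i) //= lerDl; apply: sumr_ge0 => j _; exact/ltW/amp_w_gt0.
apply: le_trans (amp_sum_w_le (leqnn T)) _.
rewrite lerD2l exchange_big /=.
have -> : K%:R / (2 * expR 1) * (1 + ln (T.+1)%:R)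
          = (expR 1)^-1 * \sum_(i < K) (1 + ln (T.+1)%:R) / 2 :> R.
  by rewrite sumr_const card_ord -mulr_natl; field; rewrite gt_eqF ?expR_gt0.
rewrite ler_pM2l ?invr_gt0 ?expR_gt0 //.
by apply: ler_sum => j _; exact: amp_lr_ratio_sum_le.
Qed.

(* [ln w_n / eta_n] telescopes, and each round contributes at least
   [r - eta r^2] by [ln (1 + x) >= x - x^2]. *)
Lemma amp_ln_w_div_lr_ge n i : (n <= T)%N ->
  - ln K%:R / amp_lr (amp_S 0) i +
    \sum_(0 <= t < n) (amp_r t.+1 i - amp_lr (amp_S t) i * amp_r t.+1 i ^+ 2)
  <= ln (amp_w n i) / amp_lr (amp_S n) i.
Proof.
elim: n => [|n IH] nT.
  rewrite big_geq // addr0 /amp_w /= div1r lnV ?posrE ?ltr0n ?mulNr //.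
  exact: ltnW.
have [_ _ r1] := amp_round nT (amp_w_gt0 (ltnW nT)).
have w0 := amp_w_gt0 (ltnW nT) i.
have e0 := amp_lr_gt0 n i; have e1 := amp_lr_gt0 n.+1 i.
move: (r1 i) e0 e1; set e := amp_lr (amp_S n) i; set e' := amp_lr (amp_S n.+1) i.
set r := amp_r n.+1 i => /andP[r_ge r_le] e0 e1.
have e12 : e <= 1 / 2 by exact: lrate_le12.
have er : -1 / 2 <= e * r <= 1 / 2 by apply/andP; split; nra.
have pos : 0 < 1 + e * r by lra.
have step : ln (amp_w n.+1 i) / e' = ln (amp_w n i) / e + ln (1 + e * r) / e.
  rewrite amp_wS -/e -/e' -/r ln_powR lnM ?posrE //.
  by field; rewrite !gt_eqF.
have lb : r - e * r ^+ 2 <= ln (1 + e * r) / e.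
  rewrite ler_pdivlMr // (_ : _ * e = e * r - (e * r) ^+ 2); last by ring.
  exact: ln1Dx_ge.
by rewrite step big_nat_recr //= -/e -/r; move: (IH (ltnW nT)) lb; lra.
Qed.

Lemma amp_lr0_ge i : 1 / 4 <= amp_lr (amp_S 0) i.
Proof.
have lnK : 1 / 2 <= ln (K%:R : R).
  apply: le_trans (_ : ln 2 <= _); first by case/andP: (ln2_bounds R).
  have K2 : (2 : R) <= K%:R by rewrite ler_nat.
  by rewrite ler_ln ?posrE //; lra.
rewrite le_min; apply/andP; split; first lra.
have := sqrtr_ge0 (ln (K%:R : R)); have := sqr_sqrtr (ltW lnK_gt0).
by rewrite /amp_S /= addr0 divr1; nra.
Qed.

Lemma amp_sum_lr_r2_le i : \sum_(0 <= t < T) amp_lr (amp_S t) i * amp_r t.+1 i ^+ 2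
  <= 3 * Num.sqrt (ln K%:R) * Num.sqrt (1 + amp_S T i).
Proof.
set a := fun t => 1 + amp_S t i.
have a_incr t : (t < T)%N -> a t <= a t.+1 <= a t + 1 by exact: amp_S_incr.
have a_ge1 : 1 <= a 0 by rewrite /a /amp_S /= addr0.
apply: le_trans (_ : \sum_(0 <= t < T) Num.sqrt (ln K%:R) * ((a t.+1 - a t) / Num.sqrt (a t))
                     <= _); last first.
  rewrite -mulr_sumr (mulrC 3) -mulrA ler_wpM2l ?sqrtr_ge0 //.
  exact: sum_diff_div_sqrt_le.
apply: ler_sum_nat => t /andP[_ tT].
have -> : amp_r t.+1 i ^+ 2 = a t.+1 - a t by rewrite /a amp_SS; ring.
rewrite [X in _ <= X]mulrA [X in _ <= X]mulrAC ler_wpM2r //.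
  by have /andP[] := a_incr t tT; lra.
apply: lrate_le_sqrt; first exact: ltW.
by have := amp_S_ge0 t i; rewrite /a; lra.
Qed.

Theorem amp_regret_le i :
  \sum_(0 <= t < T) amp_r t.+1 i <=
    Gamma R K T / Num.sqrt (ln K%:R) * Num.sqrt (1 + amp_S T i) + 2 * Gamma R K T.
Proof.
set LK := ln (K%:R : R); have LK0 : 0 < LK := lnK_gt0.
set B := ln (1 + (K%:R : R) / (2 * expR 1) * (1 + ln (T.+1)%:R)).
have arg0 : 0 <= (K%:R : R) / (2 * expR 1) * (1 + ln (T.+1)%:R).
  have : 0 <= ln (T.+1)%:R :> R by apply: ln_ge0; rewrite ler1n.
  by move=> lnT; rewrite mulr_ge0 ?divr_ge0 ?mulr_ge0 ?expR_ge0 //; lra.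
have B0 : 0 <= B by apply: ln_ge0; rewrite lerDl.
set q := Num.sqrt (1 + amp_S T i).
have lnwT : ln (amp_w T i) / amp_lr (amp_S T) i <= B * (2 + q / Num.sqrt LK).
  apply: le_trans (_ : B / amp_lr (amp_S T) i <= _).
    rewrite ler_pM2r ?invr_gt0 ?amp_lr_gt0 // /B ler_ln ?posrE ?amp_w_gt0 ?amp_wT_le //.
    lra.
  by rewrite ler_wpM2l // lrateV_le //; have := amp_S_ge0 T i; lra.
have lnK0 : LK / amp_lr (amp_S 0) i <= 4 * LK.
  rewrite ler_pdivrMr ?amp_lr_gt0 //; have := amp_lr0_ge i; nra.
have s0 : 0 < Num.sqrt LK by rewrite sqrtr_gt0.
have sL : Num.sqrt LK ^+ 2 = LK by rewrite sqr_sqrtr // ltW.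
set s := Num.sqrt LK in s0 sL lnwT *.
have -> : Gamma R K T / s * q = 3 * s * q + B * (q / s).
  by rewrite /Gamma -/LK -/B -sL; field; rewrite gt_eqF.
have -> : \sum_(0 <= t < T) amp_r t.+1 i =
    \sum_(0 <= t < T) (amp_r t.+1 i - amp_lr (amp_S t) i * amp_r t.+1 i ^+ 2) +
    \sum_(0 <= t < T) amp_lr (amp_S t) i * amp_r t.+1 i ^+ 2.
  by rewrite -big_split; apply: eq_bigr => t _; rewrite /= subrK.
have := amp_ln_w_div_lr_ge i (leqnn T); have := amp_sum_lr_r2_le i.
rewrite -/LK -/s -/q mulNr /Gamma -/LK -/B; move: lnwT lnK0; lra.
Qed.

Lemma Gamma_ge0 : 0 <= Gamma R K T.
Proof.
rewrite addr_ge0 ?mulr_ge0 ?ln_ge0 ?ler1n ?(ltnW K_gt1) // lerDl mulr_ge0 //.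
  by rewrite divr_ge0 ?mulr_ge0 ?expR_ge0.
by rewrite addr_ge0 ?ln_ge0 ?ler1n.
Qed.

End AdaptMLProd.

Section EuclideanGeometry.
Variables (R : realType) (d : nat).
Local Notation V := 'rV[R]_d.
Implicit Types (u v w : V).

Lemma dotpC u v : dotp u v = dotp v u.
Proof. by apply: eq_bigr => i _; rewrite mulrC. Qed.

Lemma dotpNr u v : dotp u (- v) = - dotp u v.
Proof. by rewrite /dotp -sumrN; apply: eq_bigr => i _; rewrite mxE mulrN. Qed.

Lemma dotpBr u v w : dotp u (v - w) = dotp u v - dotp u w.
Proof. by rewrite /dotp -sumrB; apply: eq_bigr => i _; rewrite !mxE mulrBr. Qed.

Lemma dotp_sumr n u (p : 'I_n -> R) (z : 'I_n -> V) :
  dotp u (\sum_(i < n) p i *: z i) = \sum_(i < n) p i * dotp u (z i).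
Proof.
rewrite /dotp; under eq_bigr => j _ do rewrite summxE mulr_sumr.
rewrite exchange_big /=; apply: eq_bigr => i _.
by rewrite mulr_sumr; apply: eq_bigr => j _; rewrite mxE mulrCA.
Qed.

Lemma enorm_sqr u : enorm u ^+ 2 = \sum_(i < d) u 0 i ^+ 2.
Proof. by rewrite sqr_sqrtr // sumr_ge0 // => i _; exact: sqr_ge0. Qed.

Lemma enormN u : enorm (- u) = enorm u.
Proof. by congr Num.sqrt; apply: eq_bigr => i _; rewrite mxE sqrrN. Qed.

Lemma dotp_enorm0 u v : enorm u = 0 -> dotp u v = 0.
Proof.
move=> u0; have : \sum_(i < d) u 0 i ^+ 2 == 0 by rewrite -enorm_sqr u0 expr0n.
rewrite psumr_eq0 => [/allP u0i|i _]; last exact: sqr_ge0.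
by rewrite /dotp big1 // => i _; move/(_ i (mem_index_enum _)): u0i; rewrite sqrf_eq0 => /eqP ->; rewrite mul0r.
Qed.

Lemma dotp_le_enorm u v : dotp u v <= enorm u * enorm v.
Proof.
set a := enorm u; set b := enorm v.
have [/eqP|ab0] := eqVneq (a * b) 0.
  rewrite mulf_eq0 => /orP[]/eqP ab0; first by rewrite (dotp_enorm0 _ ab0) ab0 mul0r.
  by rewrite dotpC (dotp_enorm0 _ ab0) ab0 mulr0.
have : 0 <= \sum_(i < d) (b * u 0 i - a * v 0 i) ^+ 2 by apply: sumr_ge0 => i _; exact: sqr_ge0.
have -> : \sum_(i < d) (b * u 0 i - a * v 0 i) ^+ 2 = 2 * (a * b) * (a * b - dotp u v).
  transitivity (b ^+ 2 * \sum_(i < d) u 0 i ^+ 2 + a ^+ 2 * \sum_(i < d) v 0 i ^+ 2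
      - 2 * a * b * dotp u v).
    transitivity (\sum_(i < d) (b ^+ 2 * u 0 i ^+ 2 + a ^+ 2 * v 0 i ^+ 2
        - 2 * a * b * (u 0 i * v 0 i))); first by apply: eq_bigr => i _; ring.
    by rewrite sumrB big_split /= /dotp !mulr_sumr.
  by rewrite -!enorm_sqr -/a -/b; ring.
have ab_gt0 : 0 < a * b by rewrite lt_def ab0 mulr_ge0 ?sqrtr_ge0.
by rewrite pmulr_rge0 ?subr_ge0 // mulr_gt0.
Qed.

Lemma norm_dotp_le u v : `|dotp u v| <= enorm u * enorm v.
Proof.
rewrite ler_norml dotp_le_enorm andbT.
by have := dotp_le_enorm u (- v); rewrite dotpNr enormN lerNl.
Qed.

Lemma dotp_grad (f : V -> R) x v : dotp (grad f x) v = 'd f x v.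
Proof.
rewrite /dotp [in RHS](row_sum_delta v) linear_sum /=.
by apply: eq_bigr => i _; rewrite mxE linearZ /= mulrC.
Qed.

Lemma convex_on_diff_le (X : set V) (f : V -> R) x y :
  convex_on X f -> X x -> X y -> differentiable f x ->
  'd f x (y - x) <= f y - f x.
Proof.
move=> cf Xx Xy df.
have der : derivable f x (y - x) := diff_derivable df.
rewrite -deriveE // /derive.
set g := (fun h : R => _).
rewrite (cvg_at_rightE g 0) //.
apply: limr_le.
  by apply/cvg_ex; exists (lim (g @ 0^')); exact: cvg_dnbhs_at_right der.
near=> h.
have h0 : 0 < h by near: h; exact: nbhs_right_gt.
have h1 : h < 1 by near: h; exact: nbhs_right_lt.
have := cf y x Xy Xx h ltac:(apply/andP; split; lra).
have -> : h *: y + (1 - h) *: x = h *: (y - x) + x.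
  by rewrite scalerBr scalerBl scale1r addrA addrAC.
move=> fconv; rewrite /g /= -[_ *: _]/(h^-1 * _) ler_pdivrMl //; lra.
Unshelve. all: by end_near.
Qed.

Lemma convex_set_comb (X : set V) n (p : 'I_n -> R) (z : 'I_n -> V) :
  convex_set X -> (forall i, 0 <= p i) -> \sum_(i < n) p i = 1 ->
  (forall i, X (z i)) -> X (\sum_(i < n) p i *: z i).
Proof.
move=> cX; elim: n p z => [|n IH] p z p0 p1 zX.
  by move: p1; rewrite big_ord0 => /eqP; rewrite eq_sym oner_eq0.
rewrite big_ord_recr /=; rewrite big_ord_recr /= in p1.
set s := \sum_(i < n) p (widen_ord (leqnSn n) i) in p1.
have s0 : 0 <= s by apply: sumr_ge0 => i _; exact: p0.
have [s00|s_neq0] := eqVneq s 0.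
  rewrite big1 ?add0r => [|i _]; last first.
    move/eqP: s00; rewrite psumr_eq0 => [/allP/(_ i (mem_index_enum _))/eqP ->|j _].
      by rewrite scale0r.
    exact: p0.
  by move: p1; rewrite s00 add0r => ->; rewrite scale1r.
set y := \sum_(i < n) (p (widen_ord (leqnSn n) i) / s) *: z (widen_ord (leqnSn n) i).
have Xy : X y.
  apply: IH => // [i|]; first by rewrite divr_ge0.
  by rewrite -mulr_suml -/s mulfV.
have -> : \sum_(i < n) p (widen_ord (leqnSn n) i) *: z (widen_ord (leqnSn n) i) = s *: y.
  by rewrite /y scaler_sumr; apply: eq_bigr => i _; rewrite scalerA mulrCA mulfV ?mulr1.
have -> : s = 1 - p ord_max by rewrite -p1 addrK.
rewrite addrC; apply: cX => //; have := p0 ord_max; move: p1 s0; lra.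
Qed.

End EuclideanGeometry.

Section UniversalStrategy.
Variables (R : realType) (d : nat) (X : set 'rV[R]_d) (D G : R) (T : nat)
  (Astr Aexp : seq (R -> alg R d)) (Acon : seq (alg R d))
  (fs : nat -> 'rV[R]_d -> R) (xbar : 'rV[R]_d).

Local Notation E := (experts T Astr Aexp Acon).
Local Notation K := (size E).
Local Notation xexp := (@xexp R d T Astr Aexp Acon fs).
Local Notation x_ t := (usc_x T Astr Aexp Acon fs G D xbar t).

Definition usc_losses (t : nat) (p : 'I_K -> R) : 'I_K -> R :=
  usc_loss fs G D xbar t (\sum_(i < K) p i *: xexp t i).

Lemma usc_state_amp n : usc_state T Astr Aexp Acon fs G D xbar n = amp_state usc_losses n.
Proof. by elim: n => [//|n IH] /=; rewrite IH. Qed.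

Lemma usc_xE t : x_ t = \sum_(i < K) amp_p usc_losses t i *: xexp t i.
Proof. by rewrite /usc_x usc_state_amp /amp_p /amp_w /amp_S; case: (amp_state _ _). Qed.

Hypothesis T_ge2 : (2 <= T)%N.
Hypothesis X_ok : domain_ok X D.
Hypothesis D_gt0 : 0 < D.
Hypothesis G_gt0 : 0 < G.
Hypothesis fs_ok : admissible X G T fs.
Hypothesis Astr_ok : forall A, A \in Astr -> forall lam, 0 < lam -> online_alg X (A lam).
Hypothesis Aexp_ok : forall A, A \in Aexp -> forall a, 0 < a -> online_alg X (A a).
Hypothesis Acon_ok : forall A, A \in Acon -> online_alg X A.
Hypothesis X_xbar : X xbar.
Hypothesis K_gt1 : (1 < K)%N.

Lemma grid_gt0 (lam : R) : lam \in grid R T -> 0 < lam.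
Proof. by case/mapP => k _ ->; rewrite divr_gt0 // ltr0n ?expn_gt0 // ltnW. Qed.

Lemma experts_online A : A \in E -> online_alg X A.
Proof.
rewrite !mem_cat => /orP[|/orP[]]; last exact: Acon_ok.
- by case/allpairsP => -[B lam] [/= hB hl ->]; apply: Astr_ok => //; exact: grid_gt0.
- by case/allpairsP => -[B lam] [/= hB hl ->]; apply: Aexp_ok => //; exact: grid_gt0.
Qed.

Lemma xexp_in t i : X (xexp t i).
Proof. by apply: experts_online; exact: mem_nth. Qed.

Lemma mix_in t (p : 'I_K -> R) : (forall i, 0 <= p i) -> \sum_(i < K) p i = 1 ->
  X (\sum_(i < K) p i *: xexp t i).
Proof.
by case: X_ok => _ [_ [cX _]] p0 p1; apply: convex_set_comb => // i; exact: xexp_in.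
Qed.

Lemma norm_dotp_grad_le t x z w : X z -> X w ->
  `|dotp (grad (fs t) x) (z - w)| <= enorm (grad (fs t) x) * D.
Proof.
case: X_ok => _ [_ [_ diam]] Xz Xw; apply: le_trans (norm_dotp_le _ _) _.
by rewrite ler_wpM2l ?sqrtr_ge0 // diam.
Qed.

Lemma usc_losses01 t p : (0 < t <= T)%N -> (forall i, 0 <= p i) ->
  \sum_(i < K) p i = 1 -> forall i, 0 <= usc_losses t p i <= 1.
Proof.
move=> tT p0 p1 i; have [_ [_ gradG]] := fs_ok tT.
have := norm_dotp_grad_le t (\sum_(i < K) p i *: xexp t i) (xexp_in t i) X_xbar.
move/le_trans/(_ (ler_wpM2r (ltW D_gt0) (gradG _ (mix_in t p0 p1)))).
rewrite ler_norml => /andP[lo hi].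
by rewrite /usc_losses /usc_loss divr_ge0 ?ler_pdivrMr ?mulr_gt0 //=; lra.
Qed.

Lemma usc_p_prob t : (0 < t <= T)%N ->
  (forall i, 0 <= amp_p usc_losses t i) /\ \sum_(i < K) amp_p usc_losses t i = 1.
Proof. exact: (@amp_p_prob R K T usc_losses K_gt1 usc_losses01). Qed.

Lemma usc_x_in t : (0 < t <= T)%N -> X (x_ t).
Proof. by move=> /usc_p_prob[p0 p1]; rewrite usc_xE; exact: mix_in. Qed.

Lemma usc_r_scaled t j : (0 < t <= T)%N ->
  2 * G * D * amp_r usc_losses t j =
  dotp (grad (fs t) (x_ t)) (x_ t - xexp t j).
Proof.
move=> tT; have [_ p1] := usc_p_prob tT.
rewrite usc_xE /amp_r /amp_mix /usc_losses /usc_loss.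
set p := amp_p usc_losses t in p1 *; set x := \sum_(i < K) p i *: xexp t i.
set g := grad (fs t) x; set m := 2 * G * D.
have m0 : m != 0 by rewrite gt_eqF ?mulr_gt0.
have -> : \sum_(i < K) p i * ((dotp g (xexp t i - xbar) + G * D) / m) =
          (dotp g x - dotp g xbar + G * D) / m.
  transitivity (\sum_(i < K) (p i * dotp g (xexp t i)) / m +
                \sum_(i < K) p i * ((G * D - dotp g xbar) / m)).
    by rewrite -big_split /=; apply: eq_bigr => i _; rewrite dotpBr; ring.
  have -> : \sum_(i < K) p i * ((G * D - dotp g xbar) / m) = (G * D - dotp g xbar) / m.
    by rewrite -mulr_suml p1 mul1r.
  by rewrite -mulr_suml /x dotp_sumr; ring.
by rewrite !dotpBr; field.
Qed.

Lemma usc_r_sqr_le t j : (0 < t <= T)%N ->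
  amp_r usc_losses t j ^+ 2 <= enorm (grad (fs t) (x_ t)) ^+ 2 / (4 * G ^+ 2).
Proof.
move=> tT; set g := enorm _.
have m0 : 0 < 2 * G * D by rewrite !mulr_gt0.
have hb : `|2 * G * D * amp_r usc_losses t j| <= g * D.
  by rewrite usc_r_scaled //; exact: norm_dotp_grad_le (usc_x_in tT) (xexp_in t j).
have sq : (2 * G * D * amp_r usc_losses t j) ^+ 2 <= (g * D) ^+ 2.
  by rewrite -real_normK ?num_real // lerXn2r ?nnegrE ?mulr_ge0 ?sqrtr_ge0 // ltW.
have -> : g ^+ 2 / (4 * G ^+ 2) = (g * D) ^+ 2 / (2 * G * D) ^+ 2.
  by field; rewrite !gt_eqF.
by rewrite ler_pdivlMr ?exprn_gt0 // -exprMn mulrC.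
Qed.

(* [S_T <= s / (4 G^2)] for the sum [s] of squared gradient norms turns the
   bound of Adapt-ML-Prod into the gradient-adaptive one. *)
Lemma usc_scaled_regret_le j :
  2 * G * D * \sum_(0 <= t < T) amp_r usc_losses t.+1 j
  <= add_term K T G D (\sum_(1 <= t < T.+1) enorm (grad (fs t) (x_ t)) ^+ 2).
Proof.
set s := \sum_(1 <= t < T.+1) _.
have s0 : 0 <= s by apply: sumr_ge0 => t _; exact: sqr_ge0.
have G4 : 0 < 4 * G ^+ 2 by rewrite mulr_gt0 // exprn_gt0.
have m0 : 0 < 2 * G * D by rewrite !mulr_gt0.
have ST : amp_S usc_losses T j <= s / (4 * G ^+ 2).
  rewrite amp_SE /s big_add1 /= mulr_suml; apply: ler_sum_nat => t /andP[_ tT].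
  exact: usc_r_sqr_le.
have sqrtS : Num.sqrt (1 + amp_S usc_losses T j) <= Num.sqrt (4 * G ^+ 2 + s) / (2 * G).
  have -> : 2 * G = Num.sqrt (4 * G ^+ 2).
    by rewrite (_ : 4 * G ^+ 2 = (2 * G) ^+ 2) ?sqrtr_sqr ?gtr0_norm ?mulr_gt0 //; ring.
  rewrite -sqrtrV ?(ltW G4) // -sqrtrM ?addr_ge0 ?(ltW G4) // ler_sqrt; last first.
    by rewrite mulr_ge0 ?addr_ge0 ?invr_ge0 ?(ltW G4).
  by rewrite mulrDl mulfV ?gt_eqF // lerD2l.
have amp := amp_regret_le K_gt1 usc_losses01 j.
have lnK : 0 < Num.sqrt (ln (K%:R : R)) by rewrite sqrtr_gt0 ln_gt0 // ltr1n.
set Gm := Gamma R K T in amp *; set sl := Num.sqrt (ln (K%:R : R)) in amp lnK *.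
set Q := Num.sqrt (4 * G ^+ 2 + s) in sqrtS *.
have h : Gm / sl * Num.sqrt (1 + amp_S usc_losses T j) <= Gm / sl * (Q / (2 * G)).
  by rewrite ler_wpM2l // divr_ge0 ?(Gamma_ge0 R T K_gt1) ?ltW.
have -> : add_term K T G D s = 2 * G * D * (Gm / sl * (Q / (2 * G)) + 2 * Gm).
  by rewrite /add_term -/Gm -/sl -/Q; field; rewrite !gt_eqF.
by rewrite ler_pM2l //; lra.
Qed.

Lemma usc_regret_le (k : 'I_(size Acon)) (r : R) :
  regret_bound X G T (nth (fun _ => 0) Acon k) r -> forall u, X u ->
  \sum_(1 <= t < T.+1) fs t (x_ t) - \sum_(1 <= t < T.+1) fs t u
  <= r + add_term K T G D (\sum_(1 <= t < T.+1) enorm (grad (fs t) (x_ t)) ^+ 2).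
Proof.
move=> regr u Xu.
set n1 := size [seq A lam | A <- Astr, lam <- grid R T].
set n2 := size [seq A a | A <- Aexp, a <- grid R T].
have jK : (n1 + n2 + k < K)%N by rewrite !size_cat -/n1 -/n2 addnA ltn_add2l.
set j : 'I_K := Ordinal jK.
set y := fun t => nth (fun _ => 0) Acon k (hist fs t).
have xj t : xexp t j = y t.
  rewrite /xexp /y /= nth_cat -/n1 -addnA ltnNge leq_addr /= addKn.
  by rewrite nth_cat -/n2 ltnNge leq_addr /= addKn.
have vs_j : \sum_(1 <= t < T.+1) (fs t (x_ t) - fs t (y t))
            <= 2 * G * D * \sum_(0 <= t < T) amp_r usc_losses t.+1 j.
  rewrite (_ : _ * _ = \sum_(1 <= t < T.+1) 2 * G * D * amp_r usc_losses t j); last first.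
    by rewrite big_add1 /= -mulr_sumr.
  apply: ler_sum_nat => t /andP[t1 tT]; have tT' : (0 < t <= T)%N by rewrite t1.
  have [cf [df _]] := fs_ok tT'.
  have Xy : X (y t) by rewrite -xj; exact: xexp_in.
  have := convex_on_diff_le cf (usc_x_in tT') Xy (df _ (usc_x_in tT')).
  by rewrite -dotp_grad usc_r_scaled // !dotpBr xj; lra.
have := regr fs fs_ok u Xu; rewrite -/y.
move: vs_j (usc_scaled_regret_le j); rewrite sumrB; lra.
Qed.

End UniversalStrategy.

Section Asymptotics.
Variable R : realType.

Lemma ln_pow2 (n : nat) : ln ((2 ^ n)%:R : R) = n%:R * ln 2.
Proof. by rewrite natrX lnXn // mulr_natl. Qed.

Lemma ln_nat_ge4 (T : nat) : (256 <= T)%N -> 4 <= ln (T%:R : R).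
Proof.
move=> T256; have : ln ((2 ^ 8)%:R : R) <= ln (T%:R : R).
  by rewrite ler_ln ?posrE ?ltr0n ?ler_nat //; apply: leq_trans T256.
by rewrite ln_pow2; have := ln2_bounds R; lra.
Qed.

Lemma ln_le_Ngrid (T : nat) : (2 <= T)%N -> ln (T%:R : R) <= (Ngrid T)%:R.
Proof.
move=> T2; have : ln (T%:R : R) <= ln ((2 ^ Ngrid T)%:R).
  have T0 : (0 < T)%N by exact: leq_trans T2.
  by rewrite ler_ln ?posrE ?ltr0n ?expn_gt0 // ler_nat up_logP.
rewrite ln_pow2; have /andP[_ ln2_le1] := ln2_bounds R.
have : (Ngrid T)%:R * ln (2 : R) <= (Ngrid T)%:R by rewrite ler_piMr.
lra.
Qed.

Lemma Ngrid_le_ln (T : nat) : (2 <= T)%N -> (Ngrid T)%:R <= 1 + 2 * ln (T%:R : R).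
Proof.
move=> T2; have N0 : (0 < Ngrid T)%N by rewrite up_log_gt0.
(* [2 ^ (N - 1) < T] by minimality of [N = up_log 2 T] *)
have : ln ((2 ^ (Ngrid T).-1)%:R : R) <= ln (T%:R : R).
  have T0 : (0 < T)%N by exact: leq_trans T2.
  rewrite ler_ln ?posrE ?ltr0n ?expn_gt0 // ler_nat.
  exact/ltnW/(up_log_gtn (isT : (1 < 2)%N) T2).
rewrite ln_pow2; have /andP[ln2_ge _] := ln2_bounds R.
have -> : (Ngrid T)%:R = ((Ngrid T).-1)%:R + 1 :> R by rewrite natr1 prednK.
have : ((Ngrid T).-1)%:R / 2 <= ((Ngrid T).-1)%:R * ln (2 : R) :> R.
  by rewrite ler_wpM2l //; lra.
lra.
Qed.

Lemma sqrt_le_of_le_sqr (x y : R) : 0 <= y -> x <= y ^+ 2 -> Num.sqrt x <= y.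
Proof. by move=> y0 xy; rewrite -[y]ger0_norm // -sqrtr_sqr ler_sqrt ?sqr_ge0. Qed.

Lemma Gamma_le_ln (K T : nat) : (4 <= K)%N -> 1 + ln (T.+1)%:R <= 2 * K%:R :> R ->
  Gamma R K T <= 6 * ln (K%:R : R).
Proof.
move=> K4 lnT; set k := K%:R : R.
have k4 : 4 <= k by rewrite (ler_nat R 4).
have e1 : 1 <= expR (1 : R) by rewrite -[X in X <= _]expR0 ler_expR ler01.
have lnT0 : 0 <= ln (T.+1)%:R :> R by rewrite ln_ge0 // ler1n.
suff B : ln (1 + k / (2 * expR 1) * (1 + ln (T.+1)%:R)) <= 3 * ln k.
  by rewrite /Gamma -/k; lra.
have -> : 3 * ln k = ln (k ^+ 3) by rewrite lnXn ?mulr_natl //; lra.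
rewrite ler_ln ?posrE ?exprn_gt0 //; try lra; last first.
  by rewrite ltr_pwDl // mulr_ge0 ?divr_ge0 ?mulr_ge0 ?expR_ge0 //; lra.
have kek : k / (2 * expR 1) <= k.
  by rewrite ler_pdivrMr ?mulr_gt0 ?expR_gt0 // ler_peMr //; lra.
have : k / (2 * expR 1) * (1 + ln (T.+1)%:R) <= k * (2 * k).
  by rewrite ler_pM ?divr_ge0 ?mulr_ge0 ?expR_ge0 //; lra.
nra.
Qed.

Lemma add_term_le (K T : nat) (G D s : R) : 0 < G -> 0 < D -> (1 < K)%N -> (1 <= T)%N ->
  0 <= s <= T%:R * G ^+ 2 -> Gamma R K T <= 6 * ln (K%:R : R) ->
  add_term K T G D s <= 6 * G * D *
    (4 * ln (K%:R : R) + 3 * Num.sqrt (ln (K%:R : R)) * Num.sqrt (T%:R : R)).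
Proof.
move=> G0 D0 K1 T1 /andP[s0 sT] Gm_le.
set l := ln (K%:R : R) in Gm_le *; set Gm := Gamma R K T in Gm_le *.
have l0 : 0 < l by rewrite ln_gt0 // ltr1n.
have sl0 : 0 < Num.sqrt l by rewrite sqrtr_gt0.
have sl2 : Num.sqrt l ^+ 2 = l by rewrite sqr_sqrtr // ltW.
have sT2 : Num.sqrt (T%:R : R) ^+ 2 = T%:R by rewrite sqr_sqrtr.
have Q_le : Num.sqrt (4 * G ^+ 2 + s) <= 3 * G * Num.sqrt (T%:R : R).
  apply: sqrt_le_of_le_sqr; first by rewrite !mulr_ge0 ?sqrtr_ge0 // ltW.
  have T1r : (1 : R) <= T%:R by rewrite ler1n.
  by rewrite !exprMn sT2; nra.
have Gm_sl : Gm / Num.sqrt l <= 6 * Num.sqrt l.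
  by rewrite ler_pdivrMr // -mulrA -expr2 sl2.
have Gm0 : 0 <= Gm by exact: Gamma_ge0.
rewrite /add_term -/l -/Gm.
have -> : 6 * G * D * (4 * l + 3 * Num.sqrt l * Num.sqrt (T%:R : R))
  = 4 * (6 * l) * (G * D) + D * ((6 * Num.sqrt l) * (3 * G * Num.sqrt (T%:R : R))).
  by ring.
have -> : 4 * Gm * G * D + Gm * D / Num.sqrt l * Num.sqrt (4 * G ^+ 2 + s)
  = 4 * Gm * (G * D) + D * ((Gm / Num.sqrt l) * Num.sqrt (4 * G ^+ 2 + s)).
  by ring.
apply: lerD; first by rewrite ler_pM2r ?mulr_gt0 //; lra.
by rewrite ler_pM2l // ler_pM ?divr_ge0 ?sqrtr_ge0 // ltW.
Qed.

Lemma ln_succ_le (T : nat) : (1 <= T)%N -> ln (T.+1)%:R <= 1 + ln (T%:R : R).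
Proof.
move=> T1; have /andP[_ ln2_le1] := ln2_bounds R.
have : ln (T.+1)%:R <= ln (2 * T%:R : R).
  by rewrite ler_ln ?posrE ?mulr_gt0 ?ltr0n // -natrM ler_nat mul2n -addnn -addn1 leq_add2l.
by rewrite lnM ?posrE ?ltr0n //; lra.
Qed.

Lemma lin_sqrt_le_sqrt_mul (l lam a t : R) : 1 <= lam <= t -> 1 <= a -> 0 < l <= a * lam ->
  4 * l + 3 * Num.sqrt l * Num.sqrt t <= 7 * a * Num.sqrt (t * lam).
Proof.
move=> /andP[lam1 lamt] a1 /andP[l0 l_le].
have sl2 : Num.sqrt lam ^+ 2 = lam by rewrite sqr_sqrtr //; lra.
have st2 : Num.sqrt t ^+ 2 = t by rewrite sqr_sqrtr //; lra.
have slam_t : Num.sqrt lam <= Num.sqrt t by rewrite ler_sqrt //; lra.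
have sl_le : Num.sqrt l <= a * Num.sqrt lam.
  apply: sqrt_le_of_le_sqr; first by rewrite mulr_ge0 ?sqrtr_ge0 //; lra.
  by rewrite exprMn sl2; nra.
have := sqrtr_ge0 lam; have := sqrtr_ge0 t; have := sqrtr_ge0 l.
rewrite sqrtrM; last lra.
nra.
Qed.

Theorem add_term_asymptotics (c : nat) (G D : R) : 0 < G -> 0 < D ->
  exists (C : R) (T0 : nat), forall (T a b e : nat),
    (T0 <= T)%N -> (a <= c)%N -> (b <= c)%N -> (e <= c)%N -> (0 < a + b)%N ->
    forall s : R, 0 <= s <= T%:R * G ^+ 2 ->
      add_term (R:=R) ((a + b) * (Ngrid T).+1 + e) T G D s
      <= C * Num.sqrt (T%:R * ln (ln (T%:R : R))).
Proof.
move=> G0 D0; set al := ln (9 * c%:R : R) + 1.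
exists (6 * G * D * (7 * al)), 256%N => T a b e T256 ac bc ec ab0 s s_bd.
have T2 : (2 <= T)%N by exact: leq_trans T256.
have c1 : (1 <= c)%N.
  by rewrite lt0n; apply/eqP => c0; move: ac bc ab0; rewrite c0 !leqn0 => /eqP-> /eqP->.
have c1r : (1 : R) <= c%:R by rewrite ler1n.
set tau := ln (T%:R : R); have tau4 : 4 <= tau by exact: ln_nat_ge4.
set N := Ngrid T; have N_ge : tau <= N%:R by exact: ln_le_Ngrid.
have N_le : N%:R <= 1 + 2 * tau by exact: Ngrid_le_ln.
set K := ((a + b) * N.+1 + e)%N.
have K_ge : tau + 1 <= K%:R.
  have : (N.+1 <= K)%N by rewrite (leq_trans _ (leq_addr _ _)) // leq_pmull.
  by rewrite -(ler_nat R) -natr1; lra.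
have K_le : K%:R <= 9 * c%:R * tau.
  have : (K <= 3 * c * N.+1)%N.
    rewrite (_ : 3 * c * N.+1 = 2 * c * N.+1 + c * N.+1)%N; last first.
      by rewrite -[3%N]/(2 + 1)%N !mulnDl !mul0n !addn0.
    rewrite leq_add ?(leq_trans ec) ?leq_pmulr // leq_mul2r.
    by rewrite mul2n -addnn leq_add ?orbT.
  rewrite -(ler_nat R) !natrM -natr1 => K_le.
  apply: le_trans K_le _; have : N%:R + 1 <= 3 * tau by lra.
  have : (0 : R) <= 3%:R * c%:R by rewrite mulr_ge0.
  nra.
have lam1 : 1 <= ln tau.
  have : ln (4 : R) <= ln tau by rewrite ler_ln ?posrE //; lra.
  by rewrite (_ : 4 = (2 ^ 2)%N%:R) // ln_pow2; have := ln2_bounds R; lra.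
have lam_T : ln tau <= T%:R.
  have : ln tau <= tau - 1 by apply: ln_le_subr1; lra.
  have : tau <= T%:R - 1 by apply: ln_le_subr1; rewrite ltr0n (leq_trans _ T2).
  lra.
have lnK_le : ln (K%:R : R) <= al * ln tau.
  have : ln (K%:R : R) <= ln (9 * c%:R) + ln tau.
    by rewrite -lnM ?posrE ?ler_ln ?posrE ?mulr_gt0 //; lra.
  have : 0 <= ln (9 * c%:R : R) by rewrite ln_ge0 //; lra.
  rewrite /al; nra.
apply: le_trans (add_term_le G0 D0 _ _ s_bd _) _.
- by rewrite -(ltr_nat R); lra.
- exact: ltnW.
- apply: Gamma_le_ln; first by rewrite -(ler_nat R); lra.
  by have := ln_succ_le (ltnW T2); rewrite -/tau; lra.
rewrite -[X in _ <= X]mulrA ler_pM2l ?mulr_gt0 //; apply: lin_sqrt_le_sqrt_mul.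
- by rewrite lam1.
- have : 0 <= ln (9 * c%:R : R) by rewrite ln_ge0 //; lra.
  by rewrite /al; lra.
- by rewrite lnK_le andbT; apply: ln_gt0; lra.
Qed.

End Asymptotics.

Theorem theorem3 :
  (* main bound *)
  (forall (R : realType) (d : nat) (X : set 'rV[R]_d) (D G : R) (T : nat)
     (Astr Aexp : seq (R -> alg R d)) (Acon : seq (alg R d))
     (fs : nat -> 'rV[R]_d -> R) (xbar : 'rV[R]_d),
     (2 <= T)%N ->
     domain_ok X D -> 0 < D -> 0 < G ->
     admissible X G T fs ->
     (forall A, A \in Astr -> forall lam, 0 < lam -> online_alg X (A lam)) ->
     (forall A, A \in Aexp -> forall a, 0 < a -> online_alg X (A a)) ->
     (forall A, A \in Acon -> online_alg X A) ->
     X xbar ->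
     (1 < size (experts T Astr Aexp Acon))%N ->
     forall (k : 'I_(size Acon)) (r : R),
       regret_bound X G T (nth (fun _ => 0) Acon k) r ->
       forall u, X u ->
         \sum_(1 <= t < T.+1) fs t (usc_x T Astr Aexp Acon fs G D xbar t)
         - \sum_(1 <= t < T.+1) fs t u
         <= r + add_term (R:=R) (size (experts T Astr Aexp Acon)) T G D
                  (\sum_(1 <= t < T.+1)
                     enorm (grad (fs t) (usc_x T Astr Aexp Acon fs G D xbar t)) ^+ 2))
  /\
  (* "in particular": with |A_str|,|A_exp|,|A_con| <= c (and A_str or A_exp
     nonempty), the additive term is O(sqrt(T log log T)) *)
  (forall (R : realType) (c : nat) (G D : R), 0 < G -> 0 < D ->
     exists (C : R) (T0 : nat), forall (T a b e : nat),
       (T0 <= T)%N -> (a <= c)%N -> (b <= c)%N -> (e <= c)%N -> (0 < a + b)%N ->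
       forall s : R, 0 <= s <= T%:R * G ^+ 2 ->
         add_term (R:=R) ((a + b) * (Ngrid T).+1 + e) T G D s
         <= C * Num.sqrt (T%:R * ln (ln (T%:R : R)))).
Proof.
split=> [R d X D G T Astr Aexp Acon fs xbar | R c G D]; first exact: usc_regret_le.
exact: add_term_asymptotics.
Qed.
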